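(* Assume $g$ satisfies (Hg), let $k>0$ and $(a,d)\in(0,1)\times(0,\infty)$. Suppose there exists $A\in(a,1)$ with $$\mathcal J^-(a,d,A,k):=\max_{v\in[0,A]}\big(d(k+1)v-dkA-g(v;a)\big)<0.$$ Then $c(a,d,k)<0$.
   Context: A function $g:\mathbb R\times[0,1]\to\mathbb R$, $(u,a)\mapsto g(u;a)$, satisfies (Hg) if it is $C^1$ and for every $a\in(0,1)$: $g(0;a)=g(a;a)=g(1;a)=0$, $g'(0;a)<0$, $g'(1;a)<0$, $g'(a;a)>0$ (where $g'=\partial_u g$), $g(v;a)>0$ for $v\in(-\infty,0)\cup(a,1)$ and $g(v;a)<0$ for $v\in(0,a)\cup(1,\infty)$. For $k>0$, $a\in(0,1)$, $d>0$ consider the problem: find $c\in\mathbb R$, $\Phi:\mathbb R\to\mathbb R$ with $-c\Phi'(\xi)=d(k\Phi(\xi+1)-(k+1)\Phi(\xi)+\Phi(\xi-1))+g(\Phi(\xi);a)$ for all $\xi$, $\Phi(-\infty)=0$, $\Phi(+\infty)=1$. It is known (Mallet-Paret) that under (Hg) a solution with $\Phi$ non-decreasing exists and the speed $c$ is uniquely determined; it is denoted $c(a,d,k)$. *)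

From Stdlib Require Import Reals.
From Coquelicot Require Import Coquelicot.
Open Scope R_scope.

(* Joint C^1 regularity of g on R x [0,1]: g is the restriction to R x [0,1]
   of a function G : R -> R -> R whose two partial derivatives exist
   everywhere on R x R and are jointly continuous. *)
Definition C1_on_strip (g : R -> R -> R) : Prop :=
  exists (G Gu Ga : R -> R -> R),
    (forall u a, 0 <= a <= 1 -> G u a = g u a) /\
    (forall u a, is_derive (fun v => G v a) u (Gu u a)) /\
    (forall u a, is_derive (fun b => G u b) a (Ga u a)) /\
    (forall p : R * R, continuous (fun q : R * R => Gu (fst q) (snd q)) p) /\
    (forall p : R * R, continuous (fun q : R * R => Ga (fst q) (snd q)) p).

Definition dg (g : R -> R -> R) (u a : R) : R := Derive (fun v => g v a) u.

Definition Hg (g : R -> R -> R) : Prop :=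
  C1_on_strip g /\
  forall a, 0 < a < 1 ->
    g 0 a = 0 /\ g a a = 0 /\ g 1 a = 0 /\
    dg g 0 a < 0 /\ dg g 1 a < 0 /\ 0 < dg g a a /\
    (forall v, (v < 0 \/ (a < v /\ v < 1)) -> 0 < g v a) /\
    (forall v, ((0 < v /\ v < a) \/ 1 < v) -> g v a < 0).

(* (c, Phi) solves the travelling-wave problem
     -c Phi'(xi) = d (k Phi(xi+1) - (k+1) Phi(xi) + Phi(xi-1)) + g(Phi(xi); a),
     Phi(-oo) = 0, Phi(+oo) = 1.
   When c <> 0, Phi is required to be differentiable everywhere; when c = 0
   the derivative term vanishes and the equation is purely algebraic
   (no regularity of Phi required, as in Mallet-Paret). *)
Definition TW_solution (g : R -> R -> R) (a d k c : R) (Phi : R -> R) : Prop :=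
  (c <> 0 -> forall xi, ex_derive Phi xi) /\
  (forall xi,
     - c * (if Req_EM_T c 0 then 0 else Derive Phi xi)
     = d * (k * Phi (xi + 1) - (k + 1) * Phi xi + Phi (xi - 1)) + g (Phi xi) a) /\
  is_lim Phi m_infty 0 /\
  is_lim Phi p_infty 1.

Definition nondecreasing (Phi : R -> R) : Prop :=
  forall x y, x <= y -> Phi x <= Phi y.

(* If c >= 0 then, since Phi' >= 0, the wave equation becomes the discrete
   differential inequality
     d (k Phi(xi+1) - (k+1) Phi(xi) + Phi(xi-1)) + g(Phi(xi); a) <= 0.
   With Phi >= 0 and J^- < 0 this forces Phi(xi+1) < A whenever Phi(xi) <= A.
   Starting from a point far to the left, where Phi <= A, Phi stays below A
   along xi, xi+1, xi+2, ..., contradicting Phi(+oo) = 1 > A. *)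

From Stdlib Require Import Reals Lra.
From Coquelicot Require Import Coquelicot.
Open Scope R_scope.

Lemma is_lim_m_infty_near (f : R -> R) (l eps : R) :
  is_lim f m_infty l -> 0 < eps ->
  exists M, forall x, x < M -> l - eps < f x < l + eps.
Proof.
  intros Hf Heps.
  apply (Hf (fun y => l - eps < y < l + eps)).
  exists (mkposreal eps Heps); intros y Hy.
  change (Rabs (y - l) < eps) in Hy; apply Rabs_def2 in Hy; lra.
Qed.

Lemma is_lim_p_infty_near (f : R -> R) (l eps : R) :
  is_lim f p_infty l -> 0 < eps ->
  exists M, forall x, M < x -> l - eps < f x < l + eps.
Proof.
  intros Hf Heps.
  apply (Hf (fun y => l - eps < y < l + eps)).
  exists (mkposreal eps Heps); intros y Hy.
  change (Rabs (y - l) < eps) in Hy; apply Rabs_def2 in Hy; lra.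
Qed.

Lemma nondecreasing_is_lim_m_infty_le (f : R -> R) (l : R) :
  nondecreasing f -> is_lim f m_infty l -> forall x, l <= f x.
Proof.
  intros Hnd Hf x.
  destruct (Rle_or_lt l (f x)) as [Hle | Hlt]; [exact Hle |].
  destruct (is_lim_m_infty_near f l (l - f x) Hf ltac:(lra)) as [M HM].
  assert (l - (l - f x) < f (Rmin x (M - 1)) < l + (l - f x))
    by (apply HM; generalize (Rmin_r x (M - 1)); lra).
  assert (f (Rmin x (M - 1)) <= f x) by (apply Hnd, Rmin_l).
  lra.
Qed.

Lemma nondecreasing_Derive_ge0 (f : R -> R) (x : R) :
  nondecreasing f -> (forall y, ex_derive f y) -> 0 <= Derive f x.
Proof.
  intros Hnd Hder.
  assert (pr : derivable f) by (intro y; apply ex_derive_Reals_0, Hder).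
  rewrite <- (Derive_Reals f x (pr x)).
  exact (nonneg_derivative_0 f pr Hnd x).
Qed.

Lemma TW_solution_subsolution (g : R -> R -> R) (a d k c : R) (Phi : R -> R) :
  TW_solution g a d k c Phi -> nondecreasing Phi -> 0 <= c ->
  forall xi,
    d * (k * Phi (xi + 1) - (k + 1) * Phi xi + Phi (xi - 1)) + g (Phi xi) a <= 0.
Proof.
  intros [Hder [Heq _]] Hnd Hc xi.
  rewrite <- Heq.
  destruct (Req_EM_T c 0) as [_ | Hc0]; [lra |].
  assert (0 <= Derive Phi xi) by exact (nondecreasing_Derive_ge0 Phi xi Hnd (Hder Hc0)).
  assert (0 <= c * Derive Phi xi) by (apply Rmult_le_pos; lra).
  lra.
Qed.

(* Add the two hypotheses and drop [d * u_prev >= 0]. *)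
Lemma subsolution_step_lt (G : R -> R) (k d A u_prev u u_next : R) :
  0 < k -> 0 < d -> 0 <= u_prev ->
  d * (k + 1) * u - d * k * A - G u < 0 ->
  d * (k * u_next - (k + 1) * u + u_prev) + G u <= 0 ->
  u_next < A.
Proof.
  intros Hk Hd Hprev HJ Hsub.
  assert (0 <= d * u_prev) by (apply Rmult_le_pos; lra).
  assert (Hkd : 0 < d * k) by (apply Rmult_lt_0_compat; lra).
  apply (Rmult_lt_reg_l (d * k)); [exact Hkd | nra].
Qed.

Lemma shift_invariant_bound (f : R -> R) (A x0 : R) :
  (forall x, f x <= A -> f (x + 1) <= A) -> f x0 <= A ->
  forall n, f (x0 + INR n) <= A.
Proof.
  intros Hstep H0 n; induction n as [| n IH].
  - rewrite Rplus_0_r; exact H0.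
  - rewrite S_INR, <- Rplus_assoc; apply Hstep, IH.
Qed.

Lemma is_lim_p_infty_shift_not_le (f : R -> R) (l A x0 : R) :
  is_lim f p_infty l -> A < l -> ~ (forall n, f (x0 + INR n) <= A).
Proof.
  intros Hf HAl Hle.
  destruct (is_lim_p_infty_near f l (l - A) Hf ltac:(lra)) as [M HM].
  destruct (INR_unbounded (M - x0)) as [n Hn].
  specialize (HM (x0 + INR n) ltac:(lra)).
  specialize (Hle n); lra.
Qed.

Theorem lemma5p1 :
  forall (g : R -> R -> R), Hg g ->
  forall (k a d : R), 0 < k -> 0 < a < 1 -> 0 < d ->
  (exists A, a < A < 1 /\
     forall v, 0 <= v <= A -> d * (k + 1) * v - d * k * A - g v a < 0) ->
  forall (c : R) (Phi : R -> R),
    TW_solution g a d k c Phi -> nondecreasing Phi -> c < 0.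
Proof.
  intros g _ k a d Hk Ha Hd [A [[HaA HA1] HJ]] c Phi Hsol Hnd.
  destruct (Rlt_or_le c 0) as [Hc | Hc]; [exact Hc | exfalso].
  pose proof Hsol as [_ [_ [Hm Hp]]].
  assert (Hpos : forall x, 0 <= Phi x)
    by exact (nondecreasing_is_lim_m_infty_le Phi 0 Hnd Hm).
  assert (Hstep : forall x, Phi x <= A -> Phi (x + 1) <= A).
  { intros x Hx; left.
    apply (subsolution_step_lt (fun u => g u a) k d A (Phi (x - 1)) (Phi x)).
    - exact Hk.
    - exact Hd.
    - apply Hpos.
    - apply HJ; split; [apply Hpos | exact Hx].
    - exact (TW_solution_subsolution g a d k c Phi Hsol Hnd Hc x). }
  destruct (is_lim_m_infty_near Phi 0 A Hm ltac:(lra)) as [M HM].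
  apply (is_lim_p_infty_shift_not_le Phi 1 A (M - 1) Hp HA1).
  apply shift_invariant_bound; [exact Hstep |].
  assert (HM1 := HM (M - 1) ltac:(lra)); lra.
Qed.
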